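(* Let $G$ be a connected, locally finite graph satisfying the Distinct Spheres Condition with respect to a vertex $u$. Then only finitely many vertices in the orbit of $u$ under the automorphism group $\mathrm{Aut}(G)$ are $\sim$-equivalent to $u$.
   Context: All graphs are simple with vertex set $V$; $d$ is graph distance, $B_x(r)=\{y: d(x,y)\le r\}$, $S_x(r)=\{y: d(x,y)=r\}$. $G$ satisfies the Distinct Spheres Condition with respect to $u$ if for all distinct vertices $x,y$ with $d(u,x)=d(u,y)$, $S_x(n)\ne S_y(n)$ for infinitely many $n\in\mathbb{N}$. The relation $\sim$ on $V$: $x\sim y$ iff there exists $n\in\mathbb{N}$ with $B_x(n)=B_y(n)$. *)

From Stdlib Require Import List Arith.
Set Implicit Arguments.

Section Graphs.
Variable V : Type.
Variable adj : V -> V -> Prop.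

Inductive walk : V -> V -> nat -> Prop :=
| walk_nil : forall x, walk x x 0
| walk_cons : forall x z y n, adj x z -> walk z y n -> walk x y (S n).

Definition simple_graph : Prop :=
  (forall x y, adj x y -> adj y x) /\ (forall x, ~ adj x x).

Definition connected : Prop := forall x y, exists n, walk x y n.

Definition locally_finite : Prop :=
  forall x, exists l : list V, forall y, adj x y -> In y l.

Definition dist (x y : V) (n : nat) : Prop :=
  walk x y n /\ forall m, walk x y m -> n <= m.

Definition ball (x : V) (r : nat) (y : V) : Prop :=
  exists m, m <= r /\ dist x y m.

Definition sphere (x : V) (r : nat) (y : V) : Prop := dist x y r.

Definition same_set (A B : V -> Prop) : Prop := forall z, A z <-> B z.

Definition distinct_spheres (u : V) : Prop :=
  forall x y, x <> y ->
    (exists k, dist u x k /\ dist u y k) ->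
    forall N, exists n, N <= n /\ ~ same_set (sphere x n) (sphere y n).

(* x ~ y iff B_x(n) = B_y(n) for some n *)
Definition ball_equiv (x y : V) : Prop :=
  exists n, same_set (ball x n) (ball y n).

Definition automorphism (f : V -> V) : Prop :=
  (exists g : V -> V, (forall x, g (f x) = x) /\ (forall y, f (g y) = y)) /\
  (forall x y, adj x y <-> adj (f x) (f y)).

Definition in_orbit (u v : V) : Prop := exists f, automorphism f /\ f u = v.

End Graphs.

(* If some vertex v <> u has B_u(n) = B_v(n), then every sphere S_u(k) with k > n
   equals S_v(k).  Were some image f(u) of u at distance k > n from u, pulling back by f^-1 would
   give two distinct ~-equivalent vertices f^-1(u), f^-1(v) both at distance k from u, which the
   Distinct Spheres Condition forbids (~-equivalent vertices have equal spheres from some radius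
   on).  So the whole orbit of u lies in the finite ball B_u(n).  If no such v exists, the orbit
   vertices ~-equivalent to u are just u itself. *)
From Stdlib Require Import List Arith Lia Classical.
Set Implicit Arguments.

Section Distances.
Variable V : Type.
Variable adj : V -> V -> Prop.
Hypothesis adj_sym : forall x y, adj x y -> adj y x.

Lemma walk_snoc x y z n : walk adj x y n -> adj y z -> walk adj x z (S n).
Proof.
  induction 1 as [x | x w y n Hxw _ IH]; intros Hyz.
  - econstructor; [exact Hyz | constructor].
  - econstructor; [exact Hxw | exact (IH Hyz)].
Qed.

Lemma walk_snoc_inv n : forall x z,
  walk adj x z (S n) -> exists y, walk adj x y n /\ adj y z.
Proof.
  induction n as [|n IH]; intros x z Hw; inversion Hw as [|? w ? ? Hxw Hwz]; subst.
  - inversion Hwz; subst. exists x. split; [constructor | assumption].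
  - destruct (IH _ _ Hwz) as [y [Hwy Hyz]]. exists y. split; [econstructor; eauto | exact Hyz].
Qed.

Lemma walk_sym x y n : walk adj x y n -> walk adj y x n.
Proof.
  induction 1; [constructor | eapply walk_snoc; eauto].
Qed.

Lemma dist_sym x y n : dist adj x y n -> dist adj y x n.
Proof.
  intros [Hw Hmin]. split; [exact (walk_sym Hw) |].
  intros m Hm. exact (Hmin m (walk_sym Hm)).
Qed.

Lemma walk_dist x y n : walk adj x y n -> exists d, dist adj x y d.
Proof.
  induction n as [n IH] using lt_wf_ind. intros Hw.
  destruct (classic (exists m, m < n /\ walk adj x y m)) as [[m [Hmn Hm]] | Hshortest].
  - exact (IH m Hmn Hm).
  - exists n. split; [exact Hw |]. intros m Hm.
    destruct (le_lt_dec n m); [assumption |]. exfalso. eauto.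
Qed.

Lemma ball_walk x r z : ball adj x r z <-> exists m, m <= r /\ walk adj x z m.
Proof.
  split.
  - intros [m [Hmr [Hw _]]]. eauto.
  - intros [m [Hmr Hw]]. destruct (walk_dist Hw) as [d Hd].
    exists d. split; [pose proof (proj2 Hd m Hw); lia | exact Hd].
Qed.

Lemma ball_S x r z :
  ball adj x (S r) z <-> ball adj x r z \/ exists w, ball adj x r w /\ adj w z.
Proof.
  rewrite !ball_walk. split.
  - intros [m [Hm Hw]]. destruct (le_lt_dec m r) as [Hmr | Hrm]; [left; eauto |].
    replace m with (S r) in Hw by lia. right.
    destruct (walk_snoc_inv Hw) as [w [Hxw Hwz]]. exists w. rewrite ball_walk. eauto.
  - intros [[m [Hm Hw]] | [w [Hxw Hwz]]]; [eauto |].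
    rewrite ball_walk in Hxw. destruct Hxw as [m [Hm Hw]].
    exists (S m). split; [lia | eapply walk_snoc; eauto].
Qed.

Lemma same_ball_le x y n m :
  same_set (ball adj x n) (ball adj y n) -> n <= m ->
  same_set (ball adj x m) (ball adj y m).
Proof.
  intros Hn Hnm. induction Hnm as [|m _ IH]; [exact Hn |].
  intros z. rewrite !ball_S. split;
    (intros [Hb | [w [Hb Hwz]]]; [left; apply IH | right; exists w; split]; auto; apply IH; auto).
Qed.

Lemma dist_S_ball x m z :
  dist adj x z (S m) <-> ball adj x (S m) z /\ ~ ball adj x m z.
Proof.
  split.
  - intros Hd. split; [exists (S m); auto |].
    intros [k [Hk Hd']]. pose proof (proj2 Hd k (proj1 Hd')). lia.
  - intros [[k [Hk Hd]] Hfar]. destruct (Nat.eq_dec k (S m)) as [-> | Hne]; [exact Hd |].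
    exfalso. apply Hfar. exists k. split; [lia | exact Hd].
Qed.

Lemma same_ball_sphere x y n m :
  same_set (ball adj x n) (ball adj y n) -> n < m ->
  same_set (sphere adj x m) (sphere adj y m).
Proof.
  intros Hn Hnm z. destruct m as [|m]; [lia |]. unfold sphere. rewrite !dist_S_ball.
  rewrite (same_ball_le Hn (m := S m) ltac:(lia) z), (same_ball_le Hn (m := m) ltac:(lia) z).
  reflexivity.
Qed.

Lemma ball_finite (Hlf : locally_finite adj) x n : exists l, forall z, ball adj x n z -> In z l.
Proof.
  induction n as [|n [l Hl]].
  - exists (x :: nil). intros z Hz. rewrite ball_walk in Hz.
    destruct Hz as [m [Hm Hw]]. replace m with 0 in Hw by lia. inversion Hw. now left.
  - assert (Hnbrs : exists l', forall w z, In w l -> adj w z -> In z l').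
    { clear Hl. induction l as [|a l [l' Hl']]; [exists nil; intros w z [] |].
      destruct (Hlf a) as [la Hla]. exists (la ++ l').
      intros w z [<- | Hw] Hwz; apply in_or_app; eauto. }
    destruct Hnbrs as [l' Hl']. exists (l ++ l'). intros z Hz. apply in_or_app.
    rewrite ball_S in Hz. destruct Hz as [Hz | [w [Hw Hwz]]]; eauto.
Qed.

End Distances.

Section Automorphisms.
Variable V : Type.
Variable adj : V -> V -> Prop.

Lemma walk_map (h : V -> V) x y n :
  (forall a b, adj a b -> adj (h a) (h b)) -> walk adj x y n -> walk adj (h x) (h y) n.
Proof.
  intros Hh. induction 1; [constructor | econstructor; eauto].
Qed.

Lemma automorphism_walk f x y n :
  automorphism adj f -> walk adj (f x) (f y) n <-> walk adj x y n.
Proof.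
  intros [[g [Hgf Hfg]] Hadj]. split.
  - intros Hw. rewrite <- (Hgf x), <- (Hgf y). apply walk_map; [| exact Hw].
    intros a b Hab. apply Hadj. rewrite !Hfg. exact Hab.
  - apply walk_map. intros a b. apply Hadj.
Qed.

Lemma automorphism_dist f x y n :
  automorphism adj f -> dist adj (f x) (f y) n <-> dist adj x y n.
Proof.
  intros Hf. unfold dist. setoid_rewrite (automorphism_walk _ _ _ Hf). reflexivity.
Qed.

Lemma automorphism_ball f x r z :
  automorphism adj f -> ball adj (f x) r (f z) <-> ball adj x r z.
Proof.
  intros Hf. unfold ball. setoid_rewrite (automorphism_dist _ _ _ Hf). reflexivity.
Qed.

Lemma automorphism_ball_equiv f x y :
  automorphism adj f -> ball_equiv adj (f x) (f y) -> ball_equiv adj x y.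
Proof.
  intros Hf [n Hn]. exists n. intros z.
  rewrite <- (automorphism_ball x n z Hf), <- (automorphism_ball y n z Hf). apply Hn.
Qed.

End Automorphisms.

Section DistinctSpheres.
Variable V : Type.
Variable adj : V -> V -> Prop.
Variable u : V.
Hypothesis Hdsc : distinct_spheres adj u.

Lemma distinct_spheres_ball_equiv x y k :
  x <> y -> ball_equiv adj x y -> dist adj u x k -> dist adj u y k -> False.
Proof.
  intros Hxy [n Hn] Hx Hy.
  destruct (Hdsc Hxy (ex_intro _ k (conj Hx Hy)) (S n)) as [m [Hnm Hsph]].
  exact (Hsph (same_ball_sphere Hn (m := m) ltac:(lia))).
Qed.

Lemma orbit_in_same_ball v n f :
  (forall x y, adj x y -> adj y x) -> connected adj ->
  v <> u -> same_set (ball adj u n) (ball adj v n) ->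
  automorphism adj f -> ball adj u n (f u).
Proof.
  intros Hsym Hconn Hvu Hn Hf. apply NNPP. intros Hfar.
  destruct (Hconn u (f u)) as [m Hw]. destruct (walk_dist Hw) as [k Hk].
  assert (Hnk : n < k).
  { apply Nat.nle_gt. intros Hkn. apply Hfar. exists k. split; assumption. }
  assert (Hv : dist adj v (f u) k) by exact (proj1 (same_ball_sphere Hn Hnk (f u)) Hk).
  destruct (proj1 Hf) as [g [Hgf Hfg]].
  apply (distinct_spheres_ball_equiv (x := g u) (y := g v) (k := k)).
  - intros E. apply Hvu. rewrite <- (Hfg u), <- (Hfg v), E. reflexivity.
  - apply (automorphism_ball_equiv (g u) (g v) Hf). rewrite !Hfg. exists n. exact Hn.
  - apply (automorphism_dist _ _ _ Hf). rewrite Hfg. exact (dist_sym Hsym Hk).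
  - apply (automorphism_dist _ _ _ Hf). rewrite Hfg. exact (dist_sym Hsym Hv).
Qed.

End DistinctSpheres.

Theorem mainTheorem6 (V : Type) (adj : V -> V -> Prop) (u : V)
  (Hsimple : simple_graph adj)
  (Hconn : connected adj)
  (Hlf : locally_finite adj)
  (Hdsc : distinct_spheres adj u) :
  exists l : list V, forall v, in_orbit adj u v -> ball_equiv adj u v -> In v l.
Proof.
  destruct (classic (exists v, v <> u /\ in_orbit adj u v /\ ball_equiv adj u v))
    as [[v [Hvu [_ [n Hn]]]] | Hnone].
  - destruct (ball_finite Hlf u n) as [l Hl]. exists l.
    intros x [f [Hf <-]] _. apply Hl.
    exact (orbit_in_same_ball Hdsc (proj1 Hsimple) Hconn Hvu Hn Hf).
  - exists (u :: nil). intros v Horb Hequiv.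
    destruct (classic (v = u)) as [-> | Hvu]; [now left |].
    exfalso. apply Hnone. eauto.
Qed.
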